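(* Let $A,B\in\mathrm{SL}_2\mathbb{R}$ be noncommuting, with trace $\ge 2$, coherently oriented, and let $B$ be hyperbolic. (1) Suppose $A$ is hyperbolic as well and the translation axes of $A$ and $B$ are asymptotically parallel (distinct but sharing an ideal endpoint). Then: (1.1) if $[a]\ne[b]$, the only optimal word is the one among $a$ and $b$ corresponding to the matrix with larger trace; (1.2) if $[a]=[b]$ and $I^+\cap I^-=\emptyset$, then every word is maximal, so that every Lyndon word is optimal (the complete set of optimal words is the set of all Lyndon words); if instead $[a]=[b]$ and $I^+\cap I^-\neq\emptyset$ (necessarily a singleton), then $a$ and $b$ are both optimal and there are no other optimal words. (2) If $A$ is parabolic with fixed point $\alpha^+=\alpha^-\in\{\beta^+,\beta^-\}$, then $b$ is the only optimal word.
   Context: Hyperbolic means trace $>2$, with attracting/repelling fixed points $\alpha^\pm$ (for $A$), $\beta^\pm$ (for $B$) in $\partial\mathcal{H}=\mathbb{P}^1\mathbb{R}$; a parabolic matrix (trace $2$, $\neq I$) has a unique fixed point, denoted $\alpha^+=\alpha^-$. The translation axis of a hyperbolic matrix is the geodesic joining its fixed points. Coherent orientation: with $\partial\mathcal{H}$ cyclically ordered and $[\alpha,\beta]$ the closed counterclockwise interval from $\alpha$ to $\beta$, let $I^+=\{\alpha^+\}$ if $\alpha^+=\beta^+$, and otherwise the one of $[\alpha^+,\beta^+],[\beta^+,\alpha^+]$ mapped into itself by both $A$ and $B$ (if it exists); define $I^-$ likewise with $A^{-1},B^{-1},\alpha^-,\beta^-$; the pair is coherently oriented if both exist. Words: $F_2^+$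 is the free semigroup of nonempty words over $\{a,b\}$, $|w|$ the length, $\phi(a)=A,\phi(b)=B$ extended to a homomorphism, $[w]=\mathrm{tr}(\phi(w))$. Define $w\preceq u$ iff $[w^{|u|}]\le[u^{|w|}]$; $w$ is maximal if $u\preceq w$ for all $u$. A Lyndon word is one strictly smaller lexicographically ($a<b$) than each of its proper rotations. A complete set of optimal words is a set of pairwise distinct maximal Lyndon words such that every maximal word is a power of a rotation of one of them; it is unique if it exists, and its elements are the optimal words. *)

From HB Require Import structures.
From mathcomp Require Import all_boot all_order all_algebra.
Set Implicit Arguments. Unset Strict Implicit. Unset Printing Implicit Defensive.
Import Order.TTheory GRing.Theory Num.Theory.
Local Open Scope ring_scope.

Inductive P1 (R : Type) := Fin of R | Inf.
Arguments Inf {R}.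

Section Geometry.
Variable R : realFieldType.

Definition proj (v : 'cV[R]_2) : P1 R :=
  if v 1 0 == 0 then Inf else Fin (v 0 0 / v 1 0).

Definition mob (A : 'M[R]_2) (p : P1 R) : P1 R :=
  match p with
  | Fin x => let den := A 1 0 * x + A 1 1 in
             if den == 0 then Inf else Fin ((A 0 0 * x + A 0 1) / den)
  | Inf => if A 1 0 == 0 then Inf else Fin (A 0 0 / A 1 0)
  end.

Definition SL2 (A : 'M[R]_2) : Prop := \det A = 1.
Definition hyperbolic (A : 'M[R]_2) : Prop := 2 < \tr A.
Definition parabolic (A : 'M[R]_2) : Prop := \tr A = 2 /\ A <> 1%:M.

(* attracting fixed point alpha^+: eigenline of an eigenvalue of modulus >= 1;
   repelling fixed point alpha^-: eigenline of an eigenvalue of modulus <= 1.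
   For hyperbolic A these are the usual attracting / repelling fixed points,
   for parabolic A both are the unique fixed point. *)
Definition attr_fp (A : 'M[R]_2) (p : P1 R) : Prop :=
  exists (v : 'cV[R]_2) (l : R), v <> 0 /\ A *m v = l *: v /\ 1 <= `|l| /\ p = proj v.
Definition rep_fp (A : 'M[R]_2) (p : P1 R) : Prop :=
  exists (v : 'cV[R]_2) (l : R), v <> 0 /\ A *m v = l *: v /\ `|l| <= 1 /\ p = proj v.

(* cyclic order: R increasing, then oo (counterclockwise boundary of H).
   key order: Fin x < Inf. *)
Definition p1le (p q : P1 R) : bool :=
  match p, q with
  | Fin x, Fin y => x <= y
  | _, Inf => true
  | Inf, Fin _ => false
  end.
Definition p1lt (p q : P1 R) : bool := ~~ p1le q p.

Definition p1eq (p q : P1 R) : bool := p1le p q && p1le q p.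

(* closed counterclockwise interval [p, q] *)
Definition arc (p q : P1 R) (x : P1 R) : bool :=
  if p1le p q then p1le p x && p1le x q else p1le p x || p1le x q.

Definition invariant (A : 'M[R]_2) (S : P1 R -> bool) : Prop :=
  forall x, S x -> S (mob A x).

Definition is_I (A B : 'M[R]_2) (p q : P1 R) (S : P1 R -> bool) : Prop :=
  (p = q /\ (forall x, S x = p1eq x p))
  \/ (p <> q /\ ((forall x, S x = arc p q x) \/ (forall x, S x = arc q p x))
             /\ invariant A S /\ invariant B S).

Definition is_Iplus (A B : 'M[R]_2) (ap bp : P1 R) S := is_I A B ap bp S.
Definition is_Iminus (A B : 'M[R]_2) (am bm : P1 R) S :=
  is_I (invmx A) (invmx B) am bm S.

End Geometry.

(* letters: false = a, true = b  (so that a < b as booleans) *)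
Definition la : bool := false.
Definition lb : bool := true.

Definition wpow (w : seq bool) (k : nat) : seq bool := flatten (nseq k w).

Fixpoint lexlt (s t : seq bool) : bool :=
  match s, t with
  | [::], [::] => false
  | [::], _ :: _ => true
  | _ :: _, [::] => false
  | x :: s', y :: t' => (~~ x && y) || ((x == y) && lexlt s' t')
  end.

Definition lyndon (w : seq bool) : Prop :=
  w <> [::] /\ forall k, (0 < k < size w)%N -> lexlt w (rot k w).

Section Words.
Variable R : realFieldType.
Variables A B : 'M[R]_2.

Definition phi (w : seq bool) : 'M[R]_2 :=
  foldr (fun c M => (if c then B else A) *m M) 1%:M w.

Definition wtr (w : seq bool) : R := \tr (phi w).

Definition wle (w u : seq bool) : Prop :=
  wtr (wpow w (size u)) <= wtr (wpow u (size w)).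

Definition maximal (w : seq bool) : Prop :=
  w <> [::] /\ forall u, u <> [::] -> wle u w.

Definition complete_optimal (S : seq bool -> Prop) : Prop :=
  (forall w, S w -> lyndon w /\ maximal w) /\
  (forall w, maximal w -> exists u j k, S u /\ (0 < k)%N /\ w = wpow (rot j u) k).

Definition optimal (w : seq bool) : Prop :=
  exists S, complete_optimal S /\ S w.

End Words.

(* The shared endpoint of the two axes is an eigenvector v common to A and B, with eigenvalues
   alpha and beta.  Hence phi(w) v = ev(w) v with ev(w) = alpha^#a(w) beta^#b(w), and since
   det phi(w) = 1, [w] = ev(w) + ev(w)^-1 only depends on max(ev(w), ev(w)^-1).  Comparing
   [w^|u|] with [u^|w|] thus compares the growth rates max(ev(w), ev(w)^-1)^(1/|w|), which are
   bounded by the larger of the rates of the two letters.  The bound is attained only by powers of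
   the dominant letter when the traces differ, by every word when alpha = beta, and only by powers
   of a or b when alpha beta = 1.  With equal traces, the coherent orientation tells the last two
   cases apart: I^+ and I^- contain the shared endpoint when it is attracting for one matrix and
   repelling for the other, and when it is of the same type for both, it cannot lie in the arc
   between the two other endpoints, which is invariant under A or A^-1. *)

From Pilot Require Import Defs.
From mathcomp Require Import all_boot all_order all_algebra.
From mathcomp Require Import zify ring lra.
Set Implicit Arguments. Unset Strict Implicit. Unset Printing Implicit Defensive.
Import Order.TTheory GRing.Theory Num.Theory.

Section Words.
Implicit Types (s t w x y z : seq bool) (c : bool).

Lemma wpowS w k : wpow w k.+1 = w ++ wpow w k.
Proof. by []. Qed.

Lemma wpow1 w : wpow w 1 = w.
Proof. exact: cats0. Qed.

Lemma wpowD w p q : wpow w (p + q) = wpow w p ++ wpow w q.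
Proof. by rewrite /wpow nseqD flatten_cat. Qed.

Lemma wpowM w p q : wpow (wpow w p) q = wpow w (p * q).
Proof. by elim: q => [|q IHq]; rewrite ?muln0 // wpowS IHq mulnS wpowD. Qed.

Lemma size_wpow w p : size (wpow w p) = (size w * p)%N.
Proof. by elim: p => [|p IHp]; rewrite ?muln0 // wpowS size_cat IHp mulnS. Qed.

Lemma wpow_nseq c n : wpow [:: c] n = nseq n c.
Proof. by elim: n => [|n IHn] //; rewrite wpowS IHn. Qed.

(* Lyndon-Schutzenberger: by induction on [size x + size y], peeling [x] off the front of [y]. *)
Lemma cat_comm_wpow x y : x ++ y = y ++ x ->
  exists z p q, x = wpow z p /\ y = wpow z q.
Proof.
move: {2}(size x + size y)%N (leqnn (size x + size y)) => n.
elim: n x y => [|n IHn] x y.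
  by case: x y => [|? ?] [|? ?] // _ _; exists [::], 0%N, 0%N.
wlog le_xy : x y / (size x <= size y)%N => [hwlog|].
  case: (leqP (size x) (size y)) => [/hwlog//|/ltnW le_yx sz xy].
  have [z [p [q [-> ->]]]] := hwlog y x le_yx ltac:(by rewrite addnC) (esym xy).
  by exists z, q, p.
case: x le_xy => [|c x'] le_xy sz xy.
  by exists y, 0%N, 1%N; rewrite wpow1.
set x := c :: x' in le_xy sz xy *; set y' := drop (size x) y.
have def_y : y = x ++ y'.
  have /(congr1 (take (size x))) := xy.
  by rewrite take_size_cat // takel_cat // => def_x; rewrite {1}def_x cat_take_drop.
have xy' : x ++ y' = y' ++ x.
  by move: xy; rewrite {1 2}def_y -catA => /(congr1 (drop (size x))); rewrite !drop_size_cat.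
have [|z [p [q [def_x def_y']]]] := IHn x y' _ xy'.
  by rewrite /y' size_drop; move: sz le_xy; rewrite /x /=; lia.
by exists z, p, (p + q)%N; rewrite wpowD -def_x -def_y'.
Qed.

(* A [nat] encoding of [lexlt] on words of equal length, to minimize over rotations. *)
Fixpoint binval s : nat := if s is c :: s' then (c * 2 ^ size s' + binval s')%N else 0%N.

Lemma binval_lt s : (binval s < 2 ^ size s)%N.
Proof. by elim: s => [|[] s IHs] //=; rewrite expnS; lia. Qed.

Lemma lexlt_binval s t : size s = size t -> lexlt s t = (binval s < binval t)%N.
Proof.
elim: s t => [|c s IHs] [|d t] //= [eq_st].
by move: (binval_lt s) (binval_lt t); rewrite -eq_st IHs //; case: c; case: d => /=; lia.
Qed.

Lemma binval_inj s t : size s = size t -> binval s = binval t -> s = t.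
Proof.
elim: s t => [|c s IHs] [|d t] //= [eq_st].
move: (binval_lt s) (binval_lt t); rewrite -eq_st => lt_s lt_t.
by case: c; case: d => /= eq_v; rewrite (IHs t) //; lia.
Qed.

(* The Lyndon word is the least rotation of [w] for [binval]. *)
Lemma primitive_rot_lyndon w : w <> [::] ->
  (forall k, (0 < k < size w)%N -> rot k w <> w) ->
  exists u j, lyndon u /\ w = rot j u.
Proof.
move=> w_nil primw.
have [j _ jmin] := @arg_minnP _ (ord0 : 'I_(size w).+1) xpredT (fun i => binval (rot i w)) isT.
have rot_min k : (binval (rot j w) <= binval (rot k w))%N.
  have lt_k : (minn k (size w) < (size w).+1)%N by rewrite ltnS geq_minr.
  by rewrite [rot k w]rot_minn; exact: (jmin (Ordinal lt_k)).
exists (rot j w), (size w - j)%N; split; last by have := rotK j w; rewrite /rotr size_rot.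
split=> [/(congr1 size)|k]; first by rewrite size_rot => /size0nil.
rewrite size_rot => k_range; rewrite lexlt_binval ?size_rot //.
rewrite ltn_neqAle rot_rot_add rot_min andbT; apply/negP => /eqP eq_v.
have: rot k (rot j w) = rot j w by apply: binval_inj; rewrite ?size_rot ?rot_rot_add.
by rewrite rot_rot => /rot_inj; apply: primw.
Qed.

(* If a nontrivial rotation fixes [w], then [w] is a proper power by [cat_comm_wpow]; otherwise
   [w] is primitive. *)
Lemma lyndon_factorization w : w <> [::] ->
  exists u j k, [/\ lyndon u, (0 < k)%N & w = wpow (rot j u) k].
Proof.
move: {2}(size w) (leqnn (size w)) => n.
elim: n w => [|n IHn] w; first by case: w.
move=> sz_w w_nil.
pose period k := (0 < k)%N && (rot k w == w).
have [/hasP[k]|/hasPn primw] := boolP (has period (iota 0 (size w))).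
  rewrite mem_iota add0n => /andP[_ lt_kw] /andP[k_gt0 /eqP rot_kw].
  have [|z [p [q [def_x def_y]]]] := @cat_comm_wpow (take k w) (drop k w).
    by rewrite cat_take_drop -{1}rot_kw.
  have p_gt0 : (0 < p)%N.
    case: p def_x => // /(congr1 size); rewrite size_takel ?(ltnW lt_kw) // => k0.
    by rewrite k0 in k_gt0.
  have q_gt0 : (0 < q)%N.
    by case: q def_y => // /(congr1 size); rewrite size_drop /=; lia.
  have def_w : w = wpow z (p + q) by rewrite wpowD -def_x -def_y cat_take_drop.
  have [|z_nil|u [j [m [lyn_u m_gt0 def_z]]]] := IHn z; last first.
  - exists u, j, (m * (p + q))%N; split=> //; first by rewrite muln_gt0 m_gt0 addn_gt0 p_gt0.
    by rewrite -wpowM -def_z.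
  - by move: lt_kw; rewrite def_w z_nil size_wpow.
  by move: sz_w lt_kw; rewrite def_w size_wpow; nia.
have [u [j [lyn_u def_w]]] : exists u j, lyndon u /\ w = rot j u.
  apply: primitive_rot_lyndon => // k /andP[k_gt0 lt_kw] rot_kw.
  by have := primw k; rewrite mem_iota lt_kw /period k_gt0 rot_kw eqxx => /(_ isT).
by exists u, j, 1%N; rewrite wpow1.
Qed.

End Words.

Local Open Scope ring_scope.

Section MaxInv.
Variable R : realFieldType.
Implicit Types x y a b : R.

Definition plusinv x := x + x^-1.
Definition maxinv x := Num.max x x^-1.

Lemma maxinv_ge1 x : 0 < x -> 1 <= maxinv x.
Proof.
move=> x_gt0; rewrite le_max; case: (lerP 1 x) => //= /ltW.
by rewrite invf_ge1.
Qed.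

Lemma maxinv_gt1 x : 0 < x -> x != 1 -> 1 < maxinv x.
Proof.
move=> x_gt0 x_neq1; rewrite lt_max invf_gt1 //.
by case: (ltrgtP 1 x) => // eq_1x; rewrite -eq_1x eqxx in x_neq1.
Qed.

Lemma maxinvV x : maxinv x^-1 = maxinv x.
Proof. by rewrite /maxinv invrK maxC. Qed.

Lemma plusinv_maxinv x : 0 < x -> plusinv (maxinv x) = plusinv x.
Proof. by rewrite /maxinv maxEle => _; case: ifP; rewrite /plusinv ?invrK 1?addrC. Qed.

Lemma maxinv_ge x : x <= maxinv x.
Proof. by rewrite le_max lexx. Qed.

Lemma maxinv_geV x : x^-1 <= maxinv x.
Proof. by rewrite le_max lexx orbT. Qed.

Lemma maxinvM x y : 0 < x -> 0 < y -> maxinv (x * y) <= maxinv x * maxinv y.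
Proof.
move=> /ltW x_ge0 /ltW y_ge0; rewrite ge_max invfM.
by rewrite !ler_pM ?invr_ge0 ?maxinv_ge ?maxinv_geV.
Qed.

Lemma maxinvX x n : 0 < x -> maxinv (x ^+ n) = maxinv x ^+ n.
Proof.
move=> x_gt0; have x_ge0 : x \is Num.nneg by rewrite nnegrE ltW.
have xV_ge0 : x^-1 \is Num.nneg by rewrite nnegrE invr_ge0 ltW.
rewrite /maxinv -exprVn maxEle [in RHS]maxEle.
case: (lerP x x^-1) => [le_x|/ltW le_x]; first by rewrite lerXn2r.
by case: lerP => // le_n;
  apply/eqP; rewrite eq_le le_n lerXn2r.
Qed.

Lemma plusinvB a b : a != 0 -> b != 0 ->
  plusinv b - plusinv a = (b - a) * (1 - (a * b)^-1).
Proof. by move=> a_neq0 b_neq0; rewrite /plusinv; field; rewrite a_neq0 b_neq0. Qed.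

Lemma plusinv_inj a b : a != 0 -> b != 0 -> plusinv a = plusinv b -> a = b \/ a * b = 1.
Proof.
move=> a_neq0 b_neq0 /esym/eqP; rewrite -subr_eq0 plusinvB // mulf_eq0 !subr_eq0.
by case/orP=> /eqP eq_ab; [left | right; rewrite -[a * b]invrK -eq_ab invr1].
Qed.

Lemma ler_plusinv a b : 1 <= a -> 1 <= b -> (plusinv a <= plusinv b) = (a <= b).
Proof.
move=> a_ge1 b_ge1; have [a_gt0 b_gt0] : 0 < a /\ 0 < b by split; lra.
rewrite -subr_ge0 plusinvB ?gt_eqF //; case: (lerP a b) => [le_ab|lt_ba].
  by rewrite mulr_ge0 ?subr_ge0 // invf_le1 ?mulr_gt0 //; nra.
by rewrite leNgt nmulr_rlt0 ?subr_lt0 // subr_gt0 invf_lt1 ?mulr_gt0 //; nra.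
Qed.

Lemma ler_plusinv_maxinv a b : 0 < a -> 0 < b ->
  (plusinv a <= plusinv b) = (maxinv a <= maxinv b).
Proof.
by move=> a_gt0 b_gt0; rewrite -plusinv_maxinv // -(plusinv_maxinv b_gt0) ler_plusinv ?maxinv_ge1.
Qed.

Lemma ltr_plusinv_maxinv a b : 0 < a -> 0 < b ->
  (plusinv a < plusinv b) = (maxinv a < maxinv b).
Proof. by move=> a_gt0 b_gt0; rewrite !ltNge ler_plusinv_maxinv. Qed.

Lemma ler_mulXn_dominant x y i j : 0 <= y <= x -> x ^+ i * y ^+ j <= x ^+ (i + j).
Proof.
case/andP=> y_ge0 le_yx; rewrite exprD ler_wpM2l ?exprn_ge0 ?(le_trans y_ge0) //.
by apply: lerXn2r; rewrite ?nnegrE ?(le_trans y_ge0).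
Qed.

Lemma ltr_mulXn_dominant x y i j : 0 <= y < x -> (0 < j)%N ->
  x ^+ i * y ^+ j < x ^+ (i + j).
Proof.
case/andP=> y_ge0 lt_yx j_gt0.
by rewrite exprD ltr_pM2l ?exprn_gt0 ?(le_lt_trans y_ge0) // ltrXn2r // -lt0n.
Qed.

End MaxInv.

Section Matrix2.
Variable R : comNzRingType.
Implicit Types (M : 'M[R]_2) (u v : 'cV[R]_2).

Lemma ord2P (i : 'I_2) : i = 0 \/ i = 1.
Proof. by case: i => [[|[|]]] // ?; [left|right]; apply: val_inj. Qed.

Lemma big_ord2 (F : 'I_2 -> R) : \sum_(i < 2) F i = F 0 + F 1.
Proof. by rewrite big_ord_recl big_ord1; congr (_ + F _); apply: val_inj. Qed.

Lemma det_mx2 M : \det M = M 0 0 * M 1 1 - M 0 1 * M 1 0.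
Proof.
rewrite (expand_det_row M 0) big_ord2 /cofactor !det_mx11 !mxE.
have [-> ->] : lift 0 0 = 1 :> 'I_2 /\ lift 1 0 = 0 :> 'I_2 by split; apply: val_inj.
by rewrite /= expr0 expr1; ring.
Qed.

Lemma mxtrace_mx2 M : \tr M = M 0 0 + M 1 1.
Proof. exact: big_ord2. Qed.

Lemma mulmx_cV2 M v i : (M *m v) i 0 = M i 0 * v 0 0 + M i 1 * v 1 0.
Proof. by rewrite mxE big_ord2. Qed.

Lemma cV2P u v : u 0 0 = v 0 0 -> u 1 0 = v 1 0 -> u = v.
Proof. by move=> eq0 eq1; apply/matrixP => i j; rewrite [j]ord1; case: (ord2P i) => ->. Qed.

Lemma Cayley_Hamilton_mx2 M : M *m M = \tr M *: M - (\det M)%:M.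
Proof.
apply/matrixP => i j; rewrite det_mx2 mxtrace_mx2 !mxE big_ord2.
by case: (ord2P i) => ->; case: (ord2P j) => ->; rewrite /= ?mulr0 ?mulr1; ring.
Qed.
End Matrix2.

Section SL2Eigenvalues.
Variable R : realFieldType.
Implicit Types (M : 'M[R]_2) (v : 'cV[R]_2).

Lemma eigenvalue_root_SL2 M v l : \det M = 1 -> v <> 0 -> M *m v = l *: v ->
  l ^+ 2 - \tr M * l + 1 = 0.
Proof.
move=> detM v_neq0 Mv; have := congr1 (mulmx^~ v) (Cayley_Hamilton_mx2 M).
rewrite /= -mulmxA mulmxBl -scalemxAl detM mul_scalar_mx scale1r !Mv -scalemxAr Mv !scalerA.
move/eqP; rewrite -subr_eq0.
have -> : (l * l) *: v - ((\tr M * l) *: v - v) = (l ^+ 2 - \tr M * l + 1) *: v.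
  by apply/matrixP => i j; rewrite !mxE; ring.
by rewrite scaler_eq0 => /orP[/eqP //|/eqP].
Qed.

Lemma trace_eigenvalue M v l : \det M = 1 -> v <> 0 -> M *m v = l *: v -> \tr M = plusinv l.
Proof.
move=> detM v_neq0 Mv; have quad := eigenvalue_root_SL2 detM v_neq0 Mv.
have l_neq0 : l != 0 by apply/eqP => l0; move: quad; rewrite l0; lra.
by apply: (mulfI l_neq0); rewrite /plusinv mulrDr divff //; lra.
Qed.

Lemma hyperbolic_eigenvalue M v l : SL2 M -> hyperbolic M -> v <> 0 -> M *m v = l *: v ->
  0 < l /\ l != 1.
Proof.
rewrite /SL2 /hyperbolic => detM hypM v_neq0 Mv; have quad := eigenvalue_root_SL2 detM v_neq0 Mv.
have l_gt0 : 0 < l by nra.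
split=> //; apply/eqP => l1.
by move: hypM; rewrite (trace_eigenvalue detM v_neq0 Mv) l1 /plusinv invr1; lra.
Qed.
End SL2Eigenvalues.

Section Projective.
Variable R : realFieldType.
Implicit Types (M : 'M[R]_2) (u v w e f h : 'cV[R]_2) (p q x : P1 R).

Definition cross u v := u 0 0 * v 1 0 - u 1 0 * v 0 0.

(* The sign of [ori u v w] is the cyclic orientation of [proj u], [proj v], [proj w]. *)
Definition ori u v w := cross u v * cross v w * cross w u.

Definition p1vec p : 'cV[R]_2 := \col_i (if p is Fin x then [:: x; 1] else [:: 1; 0])`_i.

Lemma cV2_neq0 v : v <> 0 -> v 0 0 != 0 \/ v 1 0 != 0.
Proof.
move=> v_neq0; case: (eqVneq (v 0 0) 0) => [v0|]; last by left.
by right; apply/eqP => v1; apply: v_neq0; apply: cV2P; rewrite mxE.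
Qed.

Lemma proj_scale v k : k != 0 -> proj (k *: v) = proj v.
Proof.
move=> k_neq0; rewrite /proj !mxE mulf_eq0 (negPf k_neq0) /=.
by case: eqP => // /eqP v1; congr Fin; field; rewrite k_neq0 v1.
Qed.

Lemma p1vec_proj v : v <> 0 -> exists2 k, k != 0 & p1vec (proj v) = k *: v.
Proof.
move=> v_neq0; rewrite /proj; case: eqP => [v1|/eqP v1].
  have v0 : v 0 0 != 0 by case: (cV2_neq0 v_neq0) => //; rewrite v1 eqxx.
  exists (v 0 0)^-1; rewrite ?invr_eq0 //.
  by apply: cV2P; rewrite !mxE /= ?mulVf // v1 mulr0.
exists (v 1 0)^-1; rewrite ?invr_eq0 //.
by apply: cV2P; rewrite !mxE /= ?mulVf // mulrC.
Qed.

Lemma cross_eq0_scale u v : u <> 0 -> cross u v = 0 -> exists k, v = k *: u.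
Proof.
move=> u_neq0 /eqP; rewrite subr_eq0 => /eqP uv.
case: (cV2_neq0 u_neq0) => [u0|u1].
  exists (v 0 0 / u 0 0); apply: cV2P; rewrite !mxE; first by field.
  by rewrite -[v 1 0](mulKf u0) uv; field.
exists (v 1 0 / u 1 0); apply: cV2P; rewrite !mxE; last by field.
by rewrite -[v 0 0](mulKf u1) -uv; field.
Qed.

Lemma cross_scale u v k l : cross (k *: u) (l *: v) = k * l * cross u v.
Proof. by rewrite /cross !mxE; ring. Qed.

Lemma ori_scale u v w k l m : ori (k *: u) (l *: v) (m *: w) = (k * l * m) ^+ 2 * ori u v w.
Proof. by rewrite /ori !cross_scale; ring. Qed.

Lemma proj_eq_cross u v : u <> 0 -> v <> 0 -> proj u = proj v -> cross u v = 0.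
Proof.
move=> u_neq0 v_neq0 eq_uv.
have [k k_neq0 def_u] := p1vec_proj u_neq0; have [l l_neq0 def_v] := p1vec_proj v_neq0.
have: cross (p1vec (proj u)) (p1vec (proj v)) = 0 by rewrite eq_uv /cross; ring.
by rewrite def_u def_v cross_scale => /eqP; rewrite !mulf_eq0 (negPf k_neq0) (negPf l_neq0) => /eqP.
Qed.

Lemma cross_neq0 u v : u <> 0 -> v <> 0 -> proj u <> proj v -> cross u v != 0.
Proof.
move=> u_neq0 v_neq0 neq_uv; apply/eqP => /(cross_eq0_scale u_neq0) [k def_v].
have k_neq0 : k != 0 by apply/eqP => k0; apply: v_neq0; rewrite def_v k0 scale0r.
by apply: neq_uv; rewrite def_v proj_scale.
Qed.

Lemma eigen_proj_eq M u w m : u <> 0 -> w <> 0 -> proj u = proj w ->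
  M *m w = m *: w -> M *m u = m *: u.
Proof.
move=> u_neq0 w_neq0 eq_uw Mw.
have [k ->] := cross_eq0_scale w_neq0 (proj_eq_cross w_neq0 u_neq0 (esym eq_uw)).
by rewrite -scalemxAr Mw !scalerA mulrC.
Qed.

Lemma proj_eigen_neq M u w l m : u <> 0 -> w <> 0 -> M *m u = l *: u -> M *m w = m *: w ->
  l != m -> proj u <> proj w.
Proof.
move=> u_neq0 w_neq0 Mu Mw neq_lm /(eigen_proj_eq u_neq0 w_neq0)/(_ Mw).
rewrite Mu => /eqP; rewrite -subr_eq0 -scalerBl scaler_eq0 subr_eq0 (negPf neq_lm) /=.
by move/eqP.
Qed.

Lemma mob_proj M v : v <> 0 -> mob M (proj v) = proj (M *m v).
Proof.
move=> v_neq0; rewrite /proj !mulmx_cV2; case: eqP => [v1|/eqP v1] /=.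
  have v0 : v 0 0 != 0 by case: (cV2_neq0 v_neq0) => //; rewrite v1 eqxx.
  rewrite v1 !mulr0 !addr0 mulf_eq0 (negPf v0) orbF.
  by case: eqP => // /eqP M10; congr Fin; field; rewrite M10 v0.
have den_v : M 1 0 * v 0 0 + M 1 1 * v 1 0 = v 1 0 * (M 1 0 * (v 0 0 / v 1 0) + M 1 1).
  by field.
rewrite den_v mulf_eq0 (negPf v1) /=.
by case: eqP => // /eqP den; congr Fin; field; rewrite v1 den_v mulf_neq0.
Qed.

Lemma arc_ori_p1vec p q x : Defs.arc p q x -> 0 <= ori (p1vec p) (p1vec x) (p1vec q).
Proof.
case: p q x => [a|] [b|] [c|]; rewrite /Defs.arc /ori /cross !mxE /=.
all: rewrite ?mulr1 ?mulr0 ?mul1r ?mul0r ?subr0 ?sub0r //.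
all: try case: (lerP a b) => ab; rewrite /= ?andbT ?orbT ?andbF ?orbF //.
all: move=> h; rewrite ?mulN1r ?mulrN1 ?mulr1 ?mul1r ?mul0r ?mulr0 //.
- by case/andP: h => ac cb; rewrite mulr_ge0 ?mulr_le0 ?subr_le0 ?subr_ge0.
- rewrite mulr_le0 ?subr_le0 ?(ltW ab) //.
  by case/orP: h => h; [apply: mulr_le0_ge0 | apply: mulr_ge0_le0]; lra.
all: lra.
Qed.

Lemma arc_proj_ori u v w : u <> 0 -> v <> 0 -> w <> 0 ->
  Defs.arc (proj u) (proj w) (proj v) -> 0 <= ori u v w.
Proof.
move=> u_neq0 v_neq0 w_neq0 /arc_ori_p1vec.
have [k k_neq0 ->] := p1vec_proj u_neq0; have [l l_neq0 ->] := p1vec_proj v_neq0.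
have [m m_neq0 ->] := p1vec_proj w_neq0.
by rewrite ori_scale pmulr_rge0 // exprn_even_gt0 //= !mulf_neq0.
Qed.

Lemma cramer_cV2 e f h : cross e f *: h = cross h f *: e + cross e h *: f.
Proof. by apply: cV2P; rewrite !mxE /cross; ring. Qed.

(* [M] moves [proj h] towards its attracting point [proj f], so [proj (M *m h)] and the repelling
   point [proj e] lie on opposite sides of the chord from [proj f] to [proj h]. *)
Lemma ori_eigen_lt0 M e f h c d : M *m e = c *: e -> M *m f = d *: f -> 0 < c < d ->
  cross e f != 0 -> cross h f != 0 -> cross e h != 0 ->
  ori f e h * ori f (M *m h) h < 0.
Proof.
move=> Me Mf /andP[c_gt0 lt_cd] ef_neq0 hf_neq0 eh_neq0.
have Mh : cross e f *: (M *m h) = (c * cross h f) *: e + (d * cross e h) *: f.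
  by rewrite scalemxAr cramer_cV2 mulmxDr -!scalemxAr Me Mf !scalerA ![cross _ _ * _]mulrC.
have key : ori f e h * ori f (cross e f *: (M *m h)) h
    = c * (c - d) * (cross e f ^+ 2 * cross h f ^+ 4 * cross e h ^+ 2).
  by rewrite Mh /ori /cross !mxE; ring.
move: key; rewrite -[f in ori f (_ *: _) h]scale1r -[h in ori _ (_ *: _) h]scale1r.
rewrite ori_scale mul1r mulr1 mulrCA => key.
have ef2_gt0 : 0 < cross e f ^+ 2 by rewrite exprn_even_gt0.
rewrite -(pmulr_rlt0 _ ef2_gt0) key pmulr_llt0 ?pmulr_rlt0 ?subr_lt0 //.
by apply: mulr_gt0; first apply: mulr_gt0; rewrite exprn_even_gt0.
Qed.

Lemma ori_swap u v w : ori w v u = - ori u v w.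
Proof. by rewrite /ori /cross; ring. Qed.

Lemma p1le_refl p : p1le p p.
Proof. by case: p => //= x; rewrite lexx. Qed.

Lemma arc_l p q : Defs.arc p q p.
Proof. by rewrite /Defs.arc p1le_refl; case: ifP. Qed.

Lemma arc_r p q : Defs.arc p q q.
Proof. by rewrite /Defs.arc !p1le_refl andbT orbT; case: ifP. Qed.

Lemma repeller_notin_invariant_arc M e f h c d (S : P1 R -> bool) :
  e <> 0 -> f <> 0 -> h <> 0 -> M *m e = c *: e -> M *m f = d *: f -> 0 < c < d ->
  proj e <> proj h -> proj h <> proj f ->
  (forall x, S x = Defs.arc (proj f) (proj h) x) \/
  (forall x, S x = Defs.arc (proj h) (proj f) x) ->
  Defs.invariant M S -> ~~ S (proj e).
Proof.
move=> e_neq0 f_neq0 h_neq0 Me Mf cd eh hf S_arc M_S; apply/negP => Se.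
have ef : proj e <> proj f.
  by apply: proj_eigen_neq e_neq0 f_neq0 Me Mf _; case/andP: cd => _ /lt_eqF ->.
have lt0 := ori_eigen_lt0 Me Mf cd (cross_neq0 e_neq0 f_neq0 ef)
  (cross_neq0 h_neq0 f_neq0 hf) (cross_neq0 e_neq0 h_neq0 eh).
have Mh_neq0 : M *m h <> 0.
  by move=> Mh0; move: lt0; rewrite Mh0 /ori /cross !mxE; rewrite !(mul0r, mulr0, subrr) ltxx.
have Sh : S (proj h) by case: S_arc => ->; [exact: arc_r | exact: arc_l].
have SMh : S (proj (M *m h)) by rewrite -mob_proj //; exact: M_S.
case: S_arc => S_arc; move: Se SMh; rewrite !S_arc => Se SMh.
  have := mulr_ge0 (arc_proj_ori f_neq0 e_neq0 h_neq0 Se) (arc_proj_ori f_neq0 Mh_neq0 h_neq0 SMh).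
  by rewrite leNgt lt0.
have := mulr_ge0 (arc_proj_ori h_neq0 e_neq0 f_neq0 Se) (arc_proj_ori h_neq0 Mh_neq0 f_neq0 SMh).
by rewrite !(ori_swap f) mulrNN leNgt lt0.
Qed.

End Projective.

Section CompleteOptimal.
Variables (R : realFieldType) (A B : 'M[R]_2).

Lemma lyndon_letter c : lyndon [:: c].
Proof. by split=> // -[|k] /andP[]. Qed.

Lemma complete_optimal_letters (S : seq bool -> Prop) :
  (forall w, S w -> exists c, w = [:: c]) -> (forall w, S w -> maximal A B w) ->
  (forall w, maximal A B w -> exists2 c, S [:: c] & w = nseq (size w) c) ->
  complete_optimal A B S.
Proof.
move=> S_letter S_max max_S; split=> [w Sw|w max_w].
  have [c def_w] := S_letter w Sw.
  by split; [rewrite def_w; exact: lyndon_letter | exact: S_max].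
have [c Sc def_w] := max_S w max_w.
exists [:: c], 0%N, (size w); rewrite rot0 wpow_nseq -def_w; split=> //; split=> //.
by rewrite lt0n size_eq0; apply/eqP; case: max_w.
Qed.

Lemma complete_optimal_lyndon :
  (forall w, w <> [::] -> maximal A B w) -> complete_optimal A B lyndon.
Proof.
move=> all_max; split=> [w lyn_w|w [w_nil _]]; first by split=> //; apply: all_max; case: lyn_w.
by have [u [j [k [lyn_u k_gt0 def_w]]]] := lyndon_factorization w_nil; exists u, j, k.
Qed.

End CompleteOptimal.

Section CommonEigenvector.
Variables (R : realFieldType) (A B : 'M[R]_2) (v : 'cV[R]_2) (alpha beta : R).
Hypotheses (detA : \det A = 1) (detB : \det B = 1) (v_neq0 : v <> 0).
Hypotheses (Av : A *m v = alpha *: v) (Bv : B *m v = beta *: v).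
Hypotheses (alpha_gt0 : 0 < alpha) (beta_gt0 : 0 < beta).

Lemma det_phi w : \det (phi A B w) = 1.
Proof.
elim: w => [|c w IHw] /=; first by rewrite det1.
by rewrite det_mulmx IHw mulr1; case: c.
Qed.

Definition letter_ev (c : bool) := if c then beta else alpha.
Definition word_ev (w : seq bool) := \prod_(c <- w) letter_ev c.

Lemma letter_ev_gt0 c : 0 < letter_ev c.
Proof. by case: c. Qed.

Lemma word_ev_gt0 w : 0 < word_ev w.
Proof. by apply: prodr_gt0 => c _; exact: letter_ev_gt0. Qed.

Lemma phi_eigen w : phi A B w *m v = word_ev w *: v.
Proof.
elim: w => [|c w IHw]; rewrite /word_ev ?big_nil ?big_cons -?/(word_ev w) /=.
  by rewrite mul1mx scale1r.
by rewrite -mulmxA IHw -scalemxAr; case: c; rewrite /= ?Av ?Bv scalerA mulrC.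
Qed.

Lemma wtr_word_ev w : wtr A B w = plusinv (word_ev w).
Proof. exact: trace_eigenvalue (det_phi w) v_neq0 (phi_eigen w). Qed.

Lemma word_ev_wpow w k : word_ev (wpow w k) = word_ev w ^+ k.
Proof.
by elim: k => [|k IHk]; rewrite /word_ev ?big_nil // wpowS big_cat -!/(word_ev _) IHk exprS.
Qed.

Lemma wle_maxinv u w :
  wle A B u w <-> maxinv (word_ev u) ^+ size w <= maxinv (word_ev w) ^+ size u.
Proof.
rewrite /wle !wtr_word_ev !word_ev_wpow ler_plusinv_maxinv ?exprn_gt0 ?word_ev_gt0 //.
by rewrite !maxinvX ?word_ev_gt0.
Qed.

Lemma size_count_mem c w : size w = (count_mem c w + count_mem (~~ c) w)%N.
Proof.
rewrite -(count_predC (pred1 c)); congr (_ + _)%N; apply: eq_count => x /=.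
by case: x; case: c.
Qed.

Lemma word_ev_count c w :
  word_ev w = letter_ev c ^+ count_mem c w * letter_ev (~~ c) ^+ count_mem (~~ c) w.
Proof.
elim: w => [|x w IHw]; rewrite /word_ev ?big_nil ?big_cons -?/(word_ev w) ?mulr1 //.
by rewrite IHw {IHw}; case: x; case: c; rewrite /= ?add0n ?add1n !exprS; ring.
Qed.

Lemma maximal_maxinv g c : (forall u, maxinv (word_ev u) <= g ^+ size u) ->
  maxinv (letter_ev c) = g ->
  forall w, w <> [::] -> maximal A B w <-> g ^+ size w <= maxinv (word_ev w).
Proof.
move=> bound gc w w_nil.
have mx_ge0 s : 0 <= maxinv (word_ev s) by rewrite (le_trans ler01) ?maxinv_ge1 ?word_ev_gt0.
have g_ge0 : 0 <= g by rewrite -gc (le_trans ler01) ?maxinv_ge1 ?letter_ev_gt0.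
split=> [[_ max_w]|le_gw].
  have /wle_maxinv := max_w [:: c] ltac:(by []).
  by rewrite /word_ev big_seq1 gc expr1.
split=> // u _; apply/wle_maxinv.
apply: (@le_trans _ _ ((g ^+ size u) ^+ size w)).
  by apply: lerXn2r; rewrite ?nnegrE ?exprn_ge0.
by rewrite -!exprM mulnC exprM; apply: lerXn2r; rewrite ?nnegrE ?exprn_ge0.
Qed.

Lemma maxinv_word_ev c w : maxinv (word_ev w) <=
  maxinv (letter_ev c) ^+ count_mem c w * maxinv (letter_ev (~~ c)) ^+ count_mem (~~ c) w.
Proof.
by rewrite (word_ev_count c) -!maxinvX ?letter_ev_gt0 // maxinvM ?exprn_gt0 ?letter_ev_gt0.
Qed.

Lemma nseq_count_mem c w : count_mem (~~ c) w = 0%N -> w = nseq (size w) c.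
Proof.
by elim: w => //= x w IHw; case: x; move: IHw; case: c => //= IHw; rewrite add0n => /IHw <-.
Qed.

Lemma complete_optimal_dominant c : maxinv (letter_ev (~~ c)) < maxinv (letter_ev c) ->
  complete_optimal A B (fun w => w = [:: c]).
Proof.
set g := maxinv (letter_ev c) => lt_g.
have g'_ge0 : 0 <= maxinv (letter_ev (~~ c)).
  by rewrite (le_trans ler01) ?maxinv_ge1 ?letter_ev_gt0.
have bound u : maxinv (word_ev u) <= g ^+ size u.
  rewrite (size_count_mem c); apply: le_trans (maxinv_word_ev c u) _.
  by rewrite ler_mulXn_dominant // g'_ge0 ltW.
have max_iff := maximal_maxinv bound (erefl g).
apply: complete_optimal_letters => [w ->|w ->|w max_w]; first by exists c.
  by apply/max_iff => //; rewrite /word_ev big_seq1 expr1.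
exists c => //; apply: nseq_count_mem; apply/eqP; rewrite -leqn0 leqNgt; apply/negP => cnt_gt0.
have w_nil : w <> [::] by case: max_w.
have : maxinv (word_ev w) < g ^+ size w.
  rewrite (size_count_mem c); apply: le_lt_trans (maxinv_word_ev c w) _.
  by rewrite ltr_mulXn_dominant // g'_ge0.
by rewrite ltNge (max_iff w w_nil).1.
Qed.

Lemma all_maximal_eq : alpha = beta -> forall w, w <> [::] -> maximal A B w.
Proof.
move=> eq_ab w w_nil; split=> // u _; apply/wle_maxinv.
have ev_size s : word_ev s = alpha ^+ size s.
  by rewrite (word_ev_count false) /= -eq_ab -exprD -size_count_mem.
by rewrite !ev_size !maxinvX // -!exprM mulnC.
Qed.

Lemma complete_optimal_inverse : alpha * beta = 1 -> alpha != 1 ->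
  complete_optimal A B (fun w => w = [:: la] \/ w = [:: lb]).
Proof.
rewrite /la /lb => ab1 alpha_neq1; set g := maxinv alpha.
have g_beta : maxinv beta = g.
  by rewrite -(mulr1_eq ab1) maxinvV.
have g_gt1 : 1 < g by exact: maxinv_gt1.
have bound u : maxinv (word_ev u) <= g ^+ size u.
  by apply: le_trans (maxinv_word_ev false u) _; rewrite /= g_beta -exprD -size_count_mem.
have max_iff := maximal_maxinv (c := false) bound (erefl g).
have max_letter c : maximal A B [:: c].
  by apply/max_iff => //; rewrite /word_ev big_seq1 expr1; case: c => /=; rewrite ?g_beta.
apply: complete_optimal_letters => [w [->|->]|w [->|->]|w max_w];
  try by [eexists | apply: max_letter].
have w_nil : w <> [::] by case: max_w.
have [a0|a_gt0] := posnP (count_mem false w); first by exists true; [right | exact: nseq_count_mem].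
have [b0|b_gt0] := posnP (count_mem true w); first by exists false; [left | exact: nseq_count_mem].
have ev_w : word_ev w = alpha ^+ (count_mem false w).-1 * beta ^+ (count_mem true w).-1.
  rewrite (word_ev_count false) /= -(prednK a_gt0) -(prednK b_gt0) !exprS.
  by rewrite mulrACA ab1 mul1r.
move/max_iff: max_w => /(_ w_nil); rewrite ev_w => le_gw; exfalso; move: le_gw; apply/negP.
rewrite -ltNge; apply: le_lt_trans (maxinvM _ _) _; rewrite ?exprn_gt0 //.
rewrite !maxinvX // g_beta -exprD ltr_eXn2l // (size_count_mem false) /=.
by rewrite -{2}(prednK a_gt0) -{2}(prednK b_gt0) addSn addnS ltnS leqnSn.
Qed.

Lemma inverse_eigen_types : alpha * beta = 1 -> alpha != 1 -> (1 < alpha) != (1 < beta).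
Proof.
move=> ab1 alpha_neq1; rewrite -(mulr1_eq ab1) invf_gt1 //; case: (ltrgtP alpha 1) => //= eq1.
by rewrite eq1 eqxx in alpha_neq1.
Qed.

Lemma asymptotic_optimal (Ip Im : P1 R -> bool) : alpha != 1 -> beta != 1 ->
  ((exists x, Ip x && Im x) <-> (1 < alpha) != (1 < beta)) ->
  (\tr B < \tr A -> complete_optimal A B (fun w => w = [:: la])) /\
  (\tr A < \tr B -> complete_optimal A B (fun w => w = [:: lb])) /\
  (\tr A = \tr B -> (forall x, ~~ (Ip x && Im x)) ->
     (forall w, w <> [::] -> maximal A B w) /\ complete_optimal A B lyndon) /\
  (\tr A = \tr B -> (exists x, Ip x && Im x) ->
     complete_optimal A B (fun w => w = [:: la] \/ w = [:: lb])).
Proof.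
move=> alpha_neq1 beta_neq1 meetE.
rewrite (trace_eigenvalue detA v_neq0 Av) (trace_eigenvalue detB v_neq0 Bv) !ltr_plusinv_maxinv //.
split; first exact: (complete_optimal_dominant (c := la)).
split; first exact: (complete_optimal_dominant (c := lb)).
have eq_tr : plusinv alpha = plusinv beta ->
    alpha = beta /\ ~ (exists x, Ip x && Im x) \/ alpha * beta = 1 /\ exists x, Ip x && Im x.
  move/(plusinv_inj (lt0r_neq0 alpha_gt0) (lt0r_neq0 beta_gt0)) => -[eq_ab|ab1].
    by left; rewrite meetE eq_ab eqxx.
  by right; split=> //; apply/meetE; exact: inverse_eigen_types.
split=> /eq_tr[[eq_ab no_meet]|[ab1 meet]] meet'.
- by split; [|apply: complete_optimal_lyndon]; exact: all_maximal_eq.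
- by have [x] := meet; rewrite (negPf (meet' x)).
- by [].
- exact: complete_optimal_inverse.
Qed.

End CommonEigenvector.

Section FixedPoints.
Variable R : realFieldType.
Implicit Types (M : 'M[R]_2) (v : 'cV[R]_2) (p : P1 R).

Lemma attr_fp_hyperbolic M p : SL2 M -> hyperbolic M -> attr_fp M p ->
  exists v l, [/\ v <> 0, M *m v = l *: v, 1 < l & p = proj v].
Proof.
move=> detM hypM [v [l [v_neq0 [Mv [l_ge1 ->]]]]]; exists v, l; split=> //.
have [l_gt0 l_neq1] := hyperbolic_eigenvalue detM hypM v_neq0 Mv.
by rewrite lt_neqAle eq_sym l_neq1 -(gtr0_norm l_gt0).
Qed.

Lemma rep_fp_hyperbolic M p : SL2 M -> hyperbolic M -> rep_fp M p ->
  exists v l, [/\ v <> 0, M *m v = l *: v, 0 < l < 1 & p = proj v].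
Proof.
move=> detM hypM [v [l [v_neq0 [Mv [l_le1 ->]]]]]; exists v, l; split=> //.
have [l_gt0 l_neq1] := hyperbolic_eigenvalue detM hypM v_neq0 Mv.
by rewrite l_gt0 lt_neqAle l_neq1 -(gtr0_norm l_gt0).
Qed.

Lemma attr_fp_parabolic M p : SL2 M -> parabolic M -> attr_fp M p ->
  exists2 v, v <> 0 & M *m v = 1 *: v /\ p = proj v.
Proof.
move=> detM [trM _] [v [l [v_neq0 [Mv [_ ->]]]]]; exists v => //; split=> //.
have quad := eigenvalue_root_SL2 detM v_neq0 Mv; rewrite trM in quad.
have /eqP : (l - 1) ^+ 2 = 0 by rewrite -quad; ring.
by rewrite sqrf_eq0 subr_eq0 => /eqP <-.
Qed.

Lemma eigen_invmx M v l : \det M = 1 -> M *m v = l *: v -> l != 0 ->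
  invmx M *m v = l^-1 *: v.
Proof.
move=> detM Mv l_neq0; have unitM : M \in unitmx by rewrite unitmxE detM unitr1.
by rewrite -[v in LHS](scalerK l_neq0) -scalemxAr -Mv mulKmx.
Qed.

Lemma p1eq_eq (x p : P1 R) : p1eq x p -> x = p.
Proof. by case: x p => [a|] [b|] //; rewrite /p1eq /= => /le_anti ->. Qed.

Lemma is_I_ends (A B : 'M[R]_2) p q S : is_I A B p q S -> S p /\ S q.
Proof.
case=> [[<- def_S]|[_ [[def_S|def_S] _]]]; rewrite !def_S ?arc_l ?arc_r //.
by rewrite /p1eq andbb p1le_refl.
Qed.

Lemma is_I_eq (A B : 'M[R]_2) p S x : is_I A B p p S -> S x -> x = p.
Proof. by case=> [[_ def_S]|[]] //; rewrite def_S => /p1eq_eq. Qed.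

Lemma is_I_arc (A B : 'M[R]_2) p q S : p <> q -> is_I A B p q S ->
  ((forall x, S x = Defs.arc p q x) \/ (forall x, S x = Defs.arc q p x)) /\
  Defs.invariant A S.
Proof. by move=> neq_pq [[]|[_ [S_arc [A_S _]]]]. Qed.

End FixedPoints.

Section SharedEndpoint.
Variables (R : realFieldType) (A B : 'M[R]_2) (Ip Im : P1 R -> bool).
Variables (vap vam vbp vbm : 'cV[R]_2) (lap lam lbp lbm : R).
Hypotheses (detA : \det A = 1).
Hypotheses (vap_neq0 : vap <> 0) (vam_neq0 : vam <> 0) (vbp_neq0 : vbp <> 0) (vbm_neq0 : vbm <> 0).
Hypotheses (Avap : A *m vap = lap *: vap) (Avam : A *m vam = lam *: vam).
Hypotheses (Bvbp : B *m vbp = lbp *: vbp) (Bvbm : B *m vbm = lbm *: vbm).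
Hypotheses (lap_gt1 : 1 < lap) (lam_range : 0 < lam < 1).
Hypotheses (lbp_gt1 : 1 < lbp) (lbm_range : 0 < lbm < 1).
Hypotheses (HIp : is_Iplus A B (proj vap) (proj vbp) Ip).
Hypotheses (HIm : is_Iminus A B (proj vam) (proj vbm) Im).

Let lam_gt0 : 0 < lam. Proof. by case/andP: lam_range. Qed.
Let lap_gt0 : 0 < lap. Proof. exact: lt_trans lap_gt1. Qed.
Let lam_lap : 0 < lam < lap.
Proof. by rewrite lam_gt0 (lt_trans _ lap_gt1) //; case/andP: lam_range. Qed.

Let proj_bp_bm : proj vbp <> proj vbm.
Proof.
apply: proj_eigen_neq vbp_neq0 vbm_neq0 Bvbp Bvbm _.
by case/andP: lbm_range => _ /lt_trans/(_ lbp_gt1)/gt_eqF ->.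
Qed.

Lemma Iplus_Iminus_disjoint_attr :
  proj vap = proj vbp -> proj vam <> proj vbm -> ~ exists x, Ip x && Im x.
Proof.
move=> eq_p neq_m [x /andP[Ipx Imx]].
have def_x : x = proj vap by move: HIp; rewrite /is_Iplus -eq_p => /is_I_eq; apply.
have [Im_arc Im_inv] := is_I_arc neq_m HIm.
have lt_inv : 0 < lap^-1 < lam^-1.
  by case/andP: lam_lap => _ lt_ml; rewrite invr_gt0 lap_gt0 ltf_pV2 ?posrE.
have neq_p_bm : proj vap <> proj vbm by rewrite eq_p; exact: proj_bp_bm.
have := repeller_notin_invariant_arc vap_neq0 vam_neq0 vbm_neq0
  (eigen_invmx detA Avap (lt0r_neq0 lap_gt0)) (eigen_invmx detA Avam (lt0r_neq0 lam_gt0))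
  lt_inv neq_p_bm (nesym neq_m) Im_arc Im_inv.
by rewrite -def_x Imx.
Qed.

Lemma Iplus_Iminus_disjoint_rep :
  proj vam = proj vbm -> proj vap <> proj vbp -> ~ exists x, Ip x && Im x.
Proof.
move=> eq_m neq_p [x /andP[Ipx Imx]].
have def_x : x = proj vam by move: HIm; rewrite /is_Iminus -eq_m => /is_I_eq; apply.
have [Ip_arc Ip_inv] := is_I_arc neq_p HIp.
have neq_m_bp : proj vam <> proj vbp by rewrite eq_m => /esym; exact: proj_bp_bm.
have := repeller_notin_invariant_arc vam_neq0 vap_neq0 vbp_neq0 Avam Avap
  lam_lap neq_m_bp (nesym neq_p) Ip_arc Ip_inv.
by rewrite -def_x Ipx.
Qed.

(* [1 < alpha] (resp. [1 < beta]) says that the shared endpoint attracts for [A] (resp. [B]). *)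
Lemma shared_endpoint_eigen :
  proj vap = proj vbp \/ proj vap = proj vbm \/ proj vam = proj vbp \/ proj vam = proj vbm ->
  ~ (proj vap = proj vbp /\ proj vam = proj vbm \/ proj vap = proj vbm /\ proj vam = proj vbp) ->
  exists (v : 'cV[R]_2) (alpha beta : R),
    [/\ v <> 0, A *m v = alpha *: v, B *m v = beta *: v &
         (exists x, Ip x && Im x) <-> (1 < alpha) != (1 < beta)].
Proof.
move=> shared distinct; have [Ip_ap Ip_bp] := is_I_ends HIp; have [Im_am Im_bm] := is_I_ends HIm.
have lam_lt1 : lam < 1 by case/andP: lam_range.
have lbm_lt1 : lbm < 1 by case/andP: lbm_range.
case: shared => [eq_p|[eq_pm|[eq_mp|eq_m]]].
- exists vap, lap, lbp; split=> //; first exact: eigen_proj_eq eq_p Bvbp.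
  rewrite lap_gt1 lbp_gt1; split=> // meet; exfalso.
  by apply: Iplus_Iminus_disjoint_attr meet => // eq_m; apply: distinct; left.
- exists vap, lap, lbm; split=> //; first exact: eigen_proj_eq eq_pm Bvbm.
  rewrite lap_gt1 ltNge (ltW lbm_lt1); split=> // _.
  by exists (proj vap); rewrite Ip_ap eq_pm Im_bm.
- exists vam, lam, lbp; split=> //; first exact: eigen_proj_eq eq_mp Bvbp.
  rewrite lbp_gt1 ltNge (ltW lam_lt1); split=> // _.
  by exists (proj vam); rewrite Im_am eq_mp Ip_bp.
- exists vam, lam, lbm; split=> //; first exact: eigen_proj_eq eq_m Bvbm.
  rewrite ltNge (ltW lam_lt1) ltNge (ltW lbm_lt1); split=> // meet; exfalso.
  by apply: Iplus_Iminus_disjoint_rep meet => // eq_p; apply: distinct; left.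
Qed.

End SharedEndpoint.

Theorem theorem3p5 (R : realFieldType) (A B : 'M[R]_2)
    (ap am bp bm : P1 R) (Ip Im : P1 R -> bool) :
  SL2 A -> SL2 B -> 2 <= \tr A -> 2 <= \tr B ->
  A *m B <> B *m A ->
  hyperbolic B ->
  attr_fp A ap -> rep_fp A am -> attr_fp B bp -> rep_fp B bm ->
  (* coherent orientation: I^+ and I^- exist *)
  is_Iplus A B ap bp Ip -> is_Iminus A B am bm Im ->
  (* (1) *)
  (hyperbolic A ->
   (ap = bp \/ ap = bm \/ am = bp \/ am = bm) ->
   ~ ((ap = bp /\ am = bm) \/ (ap = bm /\ am = bp)) ->
     (* (1.1) *)
     (\tr B < \tr A -> complete_optimal A B (fun w => w = [:: la])) /\
     (\tr A < \tr B -> complete_optimal A B (fun w => w = [:: lb])) /\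
     (* (1.2) *)
     (\tr A = \tr B -> (forall x, ~~ (Ip x && Im x)) ->
        (forall w, w <> [::] -> maximal A B w) /\ complete_optimal A B lyndon) /\
     (\tr A = \tr B -> (exists x, Ip x && Im x) ->
        complete_optimal A B (fun w => w = [:: la] \/ w = [:: lb])))
  /\
  (* (2) *)
  (parabolic A -> (ap = bp \/ ap = bm) ->
     complete_optimal A B (fun w => w = [:: lb])).
Proof.
move=> detA detB _ _ _ hypB attrA repA attrB repB HIp HIm.
have [vbp [lbp [vbp_neq0 Bvbp lbp_gt1 def_bp]]] := attr_fp_hyperbolic detB hypB attrB.
have [vbm [lbm [vbm_neq0 Bvbm lbm_range def_bm]]] := rep_fp_hyperbolic detB hypB repB.
subst bp bm; split=> [hypA shared distinct|parA shared].
  have [vap [lap [vap_neq0 Avap lap_gt1 def_ap]]] := attr_fp_hyperbolic detA hypA attrA.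
  have [vam [lam [vam_neq0 Avam lam_range def_am]]] := rep_fp_hyperbolic detA hypA repA.
  subst ap am; have [v [alpha [beta [v_neq0 Av Bv meetE]]]] := shared_endpoint_eigen
    detA vap_neq0 vam_neq0 vbp_neq0 vbm_neq0 Avap Avam Bvbp Bvbm lap_gt1 lam_range
    lbp_gt1 lbm_range HIp HIm shared distinct.
  have [alpha_gt0 alpha_neq1] := hyperbolic_eigenvalue detA hypA v_neq0 Av.
  have [beta_gt0 beta_neq1] := hyperbolic_eigenvalue detB hypB v_neq0 Bv.
  exact: (asymptotic_optimal detA detB v_neq0 Av Bv alpha_gt0 beta_gt0 alpha_neq1 beta_neq1 meetE).
have [v v_neq0 [Av def_ap]] := attr_fp_parabolic detA parA attrA.
have [beta Bv] : exists beta, B *m v = beta *: v.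
  by case: shared; rewrite def_ap => shared; [exists lbp | exists lbm];
    exact: eigen_proj_eq shared _.
have [beta_gt0 beta_neq1] := hyperbolic_eigenvalue detB hypB v_neq0 Bv.
apply: (complete_optimal_dominant detA detB v_neq0 Av Bv ltr01 beta_gt0 (c := lb)).
by rewrite /= /maxinv invr1 maxxx maxinv_gt1.
Qed.
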